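(* For all integers $0\le k\le j$, $$\sum_{h=k}^j(-q)^{h-j}q^{k^2}{h\brack k}_+\,a^{-j}q^{j^2+h^2}\frac{(a^2q^{2-2j-2h};q^2)_j}{(q^2;q^2)_j}{j\brack h}_+=(-q)^{k-j}a^{-j}q^{2k^2+j^2}{j\brack k}_+\frac{(a^2q^{2-2j-2k};q^2)_k}{(q^2;q^2)_k}.$$
   Context: $(x;q^2)_n=\prod_{i=0}^{n-1}(1-xq^{2i})$, $(q^2;q^2)_n=\prod_{i=1}^n(1-q^{2i})$, and ${N\brack k}_+=\frac{(q^2;q^2)_N}{(q^2;q^2)_k(q^2;q^2)_{N-k}}$. (The identity expresses the reduced closure of a top twist applied to the basis web $UP[j,k]$.) *)

From HB Require Import structures.
From mathcomp Require Import all_boot all_order all_algebra.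
Set Implicit Arguments. Unset Strict Implicit. Unset Printing Implicit Defensive.
Import Order.TTheory GRing.Theory Num.Theory.
Local Open Scope ring_scope.

Definition qpoch2 (F : fieldType) (x q : F) (n : nat) : F :=
  \prod_(i < n) (1 - x * q ^+ (2 * i)).

Definition qfac2 (F : fieldType) (q : F) (n : nat) : F :=
  \prod_(i < n) (1 - q ^+ (2 * i.+1)).

Definition qbinp (F : fieldType) (q : F) (N k : nat) : F :=
  qfac2 q N / (qfac2 q k * qfac2 q (N - k)).

From HB Require Import structures.
From mathcomp Require Import all_boot all_order all_algebra.
From mathcomp Require Import ring zify.
Import Order.TTheory GRing.Theory Num.Theory.
Set Implicit Arguments. Unset Strict Implicit.
Local Open Scope ring_scope.

(* Write h = k + m and j = k + n.  After the q-trinomial rule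
   [j, k+m] [k+m, k] = [j, k] [j-k, m] all factors not depending on m come
   out of the sum, and what remains is the q-binomial-type identity
     sum_m (-1)^m q^(m^2 + m + 2km) [n, m] (z q^(-2m); q^2)_(k+n)
       = (z; q^2)_k (q^(2k+2); q^2)_n,
   which follows by induction on n from the q-Pascal rule, since
   (x; q^2)_(N+1) can be peeled off at either end. *)

Section GaussianBinomial.
Variables (F : fieldType) (q : F).

(* The Gaussian binomial in base q^2, defined by the q-Pascal rule so that it
   makes sense even when (q^2; q^2)_n vanishes. *)
Fixpoint gbinom (n m : nat) : F :=
  match n, m with
  | _, 0 => 1
  | 0, _.+1 => 0
  | n'.+1, m'.+1 => gbinom n' m'.+1 + q ^+ (2 * (n' - m')) * gbinom n' m'
  end.

Lemma gbinomn0 n : gbinom n 0 = 1.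
Proof. by case: n. Qed.

Lemma gbinomSS n m : gbinom n.+1 m.+1 = gbinom n m.+1 + q ^+ (2 * (n - m)) * gbinom n m.
Proof. by []. Qed.

Lemma gbinom_small n m : (n < m)%N -> gbinom n m = 0.
Proof.
elim: n m => [|n IHn] [|m] //= ltnm.
by rewrite !IHn ?mulr0 ?addr0 // ltnW.
Qed.

Lemma qfac2_0 : qfac2 q 0 = 1.
Proof. by rewrite /qfac2 big_ord0. Qed.

Lemma qfac2S n : qfac2 q n.+1 = qfac2 q n * (1 - q ^+ (2 * n.+1)).
Proof. by rewrite /qfac2 big_ord_recr. Qed.

Lemma qfac2D k n :
  qfac2 q (k + n) = qfac2 q k * \prod_(i < n) (1 - q ^+ (2 * (k + i).+1)).
Proof.
elim: n => [|n IHn]; first by rewrite big_ord0 addn0 mulr1.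
by rewrite addnS qfac2S IHn big_ord_recr /= mulrA.
Qed.

Lemma gbinom_qfac2 n m :
  (m <= n)%N -> gbinom n m * qfac2 q m * qfac2 q (n - m) = qfac2 q n.
Proof.
elim: n m => [|n IHn] [|m] //; rewrite ?gbinomn0 ?qfac2_0 ?mul1r ?subn0 //.
rewrite subSS gbinomSS ltnS => lemn.
have [ltmn | lenm] := ltnP m n; last first.
  have {lemn lenm} -> : m = n by apply/eqP; rewrite eqn_leq lemn.
  have := IHn n (leqnn n); rewrite subnn qfac2_0 mulr1 => IHnn.
  by rewrite gbinom_small // add0r muln0 expr0 mul1r mulr1 qfac2S mulrA IHnn.
have [d def_d] : exists d, (n - m = d.+1)%N by exists (n - m.+1)%N; lia.
have IH1 := IHn m.+1 ltmn; have IH2 := IHn m (ltnW ltmn).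
have def_d' : (n - m.+1 = d)%N by lia.
rewrite def_d' in IH1; rewrite def_d !qfac2S in IH1 IH2 *.
set A := q ^+ (2 * m.+1) in IH1 *; set B := q ^+ (2 * d.+1) in IH2 *.
have -> : q ^+ (2 * n.+1) = A * B by rewrite -exprD; congr (_ ^+ _); lia.
(* 1 - AB = (1 - B) + B (1 - A) splits (q^2;q^2)_(n+1) along the two Pascal terms *)
have -> : qfac2 q n * (1 - A * B) = qfac2 q n * (1 - B) + B * (qfac2 q n * (1 - A)) by ring.
by rewrite -{1}IH1 -IH2; ring.
Qed.

Lemma qbinpE n m : (m <= n)%N -> qfac2 q m != 0 -> qfac2 q (n - m) != 0 ->
  qbinp q n m = gbinom n m.
Proof.
move=> lemn fm_neq0 fnm_neq0; rewrite /qbinp -(gbinom_qfac2 lemn).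
by field; rewrite fm_neq0 fnm_neq0.
Qed.

Lemma qbinp_trinomial j k m : (k + m <= j)%N ->
  (forall i, (i <= j)%N -> qfac2 q i != 0) ->
  qbinp q j (k + m) * qbinp q (k + m) k = qbinp q j k * qbinp q (j - k) m.
Proof.
move=> lekmj fac_neq0; rewrite /qbinp.
have -> : (k + m - k = m)%N by lia.
have -> : (j - k - m = j - (k + m))%N by lia.
have f1 := fac_neq0 k ltac:(lia); have f2 := fac_neq0 m ltac:(lia).
have f3 := fac_neq0 (k + m)%N lekmj; have f4 := fac_neq0 (j - k)%N ltac:(lia).
have f5 := fac_neq0 (j - (k + m))%N ltac:(lia).
by field; rewrite f1 f2 f3 f4 f5.
Qed.

End GaussianBinomial.

Arguments gbinom : simpl never.

Section ShiftedPochhammerSum.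
Variables (F : fieldType) (q : F).
Hypothesis q_neq0 : q != 0.

Definition alt_coef (k m : nat) : F := (- q) ^+ m * q ^+ (m ^ 2) * q ^+ (2 * k * m).

Lemma alt_coefS k m : alt_coef k m.+1 = - (alt_coef k m * q ^+ (2 * (k + m).+1)).
Proof.
rewrite /alt_coef exprS.
have -> : (m.+1 ^ 2 = m ^ 2 + 2 * m + 1)%N by rewrite !expnS expn0; lia.
have -> : (2 * k * m.+1 = 2 * k * m + 2 * k)%N by lia.
have -> : (2 * (k + m).+1 = 2 * k + 2 * m + 1 + 1)%N by lia.
by rewrite !exprD expr1; ring.
Qed.

Lemma qpoch2S x N : qpoch2 x q N.+1 = qpoch2 x q N * (1 - x * q ^+ (2 * N)).
Proof. by rewrite /qpoch2 big_ord_recr. Qed.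

Lemma qpoch2Sl x N : qpoch2 x q N.+1 = (1 - x) * qpoch2 (x * q ^+ 2) q N.
Proof.
rewrite /qpoch2 big_ord_recl /= muln0 expr0 mulr1; congr (_ * _).
by apply: eq_bigr => i _; rewrite /bump /= add1n mulnS exprD mulrA.
Qed.

Lemma expr_shift2 z m : z * q ^- (2 * m.+1) * q ^+ 2 = z * q ^- (2 * m).
Proof.
by rewrite mulnS exprD; field; rewrite expf_neq0 ?q_neq0.
Qed.

Lemma qpoch2_shifted_sum k n z :
  \sum_(m < n.+1) alt_coef k m * gbinom q n m * qpoch2 (z * q ^- (2 * m)) q (k + n)
  = qpoch2 z q k * \prod_(i < n) (1 - q ^+ (2 * (k + i).+1)).
Proof.
elim: n => [|n IHn].
  by rewrite big_ord1 big_ord0 /alt_coef gbinomn0 /= !expr0 muln0 expr0 invr1 addn0 !mulr1 !mul1r.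
rewrite [in RHS]big_ord_recr /= mulrA -IHn mulr_suml.
rewrite big_ord_recl /= gbinomn0.
under eq_bigr => i _ do rewrite /bump /= add1n gbinomSS mulrDr mulrDl.
rewrite big_split /= addrA.
have -> : alt_coef k 0 * 1 * qpoch2 (z * q ^- (2 * 0)) q (k + n.+1) +
   \sum_(i < n.+1) alt_coef k i.+1 * gbinom q n i.+1 * qpoch2 (z * q ^- (2 * i.+1)) q (k + n.+1)
   = \sum_(i < n.+2) alt_coef k i * gbinom q n i * qpoch2 (z * q ^- (2 * i)) q (k + n.+1).
  by rewrite [RHS]big_ord_recl /= gbinomn0.
rewrite big_ord_recr /= gbinom_small // mulr0 mul0r addr0 -big_split /=.
apply: eq_bigr => i _.
have lein : (i <= n)%N by rewrite -ltnS ltn_ord.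
(* peel the last factor of the i-th term and the first factor of the (i+1)-th *)
rewrite addnS qpoch2S qpoch2Sl alt_coefS expr_shift2.
have -> : (2 * (k + n).+1 = 2 * (k + i).+1 + 2 * (n - i))%N by lia.
have -> : z * q ^- (2 * i) * q ^+ (2 * (k + n))
        = q ^+ (2 * (k + i).+1) * q ^+ (2 * (n - i)) * (z * q ^- (2 * i.+1)).
  rewrite -exprD -(expr_shift2 z i).
  have -> : (2 * (k + i).+1 + 2 * (n - i) = 2 * (k + n) + 2)%N by lia.
  by rewrite exprD; ring.
by rewrite exprD; ring.
Qed.

End ShiftedPochhammerSum.

Lemma summand_reindex (F : fieldType) (a q : F) (j k m : nat) :
  a != 0 -> q != 0 -> (forall i, (i <= j)%N -> qfac2 q i != 0) -> (k + m <= j)%N ->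
  (- q) ^ ((k + m)%N%:Z - j%:Z) * q ^+ (k ^ 2) * qbinp q (k + m) k
    * a ^- j * q ^+ (j ^ 2 + (k + m) ^ 2)
    * (qpoch2 (a ^+ 2 * q ^ (2%:Z - 2%:Z * j%:Z - 2%:Z * (k + m)%N%:Z)) q j / qfac2 q j)
    * qbinp q j (k + m)
  = (- q) ^ (k%:Z - j%:Z) * a ^- j * q ^+ (2 * k ^ 2 + j ^ 2) * qbinp q j k / qfac2 q j
    * (alt_coef q k m * qbinp q (j - k) m
       * qpoch2 (a ^+ 2 * q ^ (2%:Z - 2%:Z * j%:Z - 2%:Z * k%:Z) * q ^- (2 * m)) q j).
Proof.
move=> a_neq0 q_neq0 fac_neq0 lekmj.
have Nq_neq0 : - q != 0 by rewrite oppr_eq0.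
have -> : (- q) ^ ((k + m)%N%:Z - j%:Z) = (- q) ^+ m * (- q) ^ (k%:Z - j%:Z).
  by rewrite exprnP -expfzDr //; congr (_ ^ _); lia.
have -> : q ^ (2%:Z - 2%:Z * j%:Z - 2%:Z * (k + m)%N%:Z)
        = q ^ (2%:Z - 2%:Z * j%:Z - 2%:Z * k%:Z) * q ^- (2 * m).
  by rewrite exprnN -expfzDr //; congr (_ ^ _); lia.
rewrite [a ^+ 2 * _]mulrA.
have bin_neq0 : qbinp q (k + m) k != 0.
  rewrite /qbinp mulf_neq0 ?invr_neq0 ?mulf_neq0 ?fac_neq0 //; lia.
rewrite -[qbinp q j (k + m)](mulfK bin_neq0) qbinp_trinomial //.
have -> : q ^+ (j ^ 2 + (k + m) ^ 2)
        = q ^+ (j ^ 2) * q ^+ (k ^ 2) * q ^+ (m ^ 2) * q ^+ (2 * k * m).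
  by rewrite -!exprD; congr (_ ^+ _); rewrite !expnS !expn0; lia.
have -> : q ^+ (2 * k ^ 2 + j ^ 2) = q ^+ (k ^ 2) * q ^+ (k ^ 2) * q ^+ (j ^ 2).
  by rewrite -!exprD; congr (_ ^+ _); lia.
rewrite /alt_coef; field.
by rewrite fac_neq0 // expf_neq0 // a_neq0.
Qed.

Theorem mainTheorem7 (F : fieldType) (a q : F) (j k : nat)
  (ha : a != 0) (hq : q != 0)
  (hqj : forall i : nat, (0 < i <= j)%N -> 1 - q ^+ (2 * i) != 0)
  (hkj : (k <= j)%N) :
  \sum_(k <= h < j.+1)
     ((- q) ^ (h%:Z - j%:Z) * q ^+ (k ^ 2) * qbinp q h k
      * a ^- j * q ^+ (j ^ 2 + h ^ 2)
      * (qpoch2 (a ^+ 2 * q ^ (2%:Z - 2%:Z * j%:Z - 2%:Z * h%:Z)) q j / qfac2 q j)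
      * qbinp q j h)
  = (- q) ^ (k%:Z - j%:Z) * a ^- j * q ^+ (2 * k ^ 2 + j ^ 2) * qbinp q j k
      * (qpoch2 (a ^+ 2 * q ^ (2%:Z - 2%:Z * j%:Z - 2%:Z * k%:Z)) q k / qfac2 q k).
Proof.
have fac_neq0 i : (i <= j)%N -> qfac2 q i != 0.
  by move=> leij; apply/prodf_neq0 => l _; apply: hqj; rewrite ltn0Sn /= (leq_trans _ leij).
have [n def_j] : exists n, j = (k + n)%N by exists (j - k)%N; lia.
rewrite -{1}(add0n k) big_addn (_ : j.+1 - k = n.+1)%N; last by lia.
rewrite big_mkord.
have def_n : (j - k = n)%N by lia.
under eq_bigr => m _.
  have [lemn lekmj] : (m <= n)%N /\ (k + m <= j)%N by have := ltn_ord m; lia.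
  rewrite addnC summand_reindex // def_n (@qbinpE _ q n m) ?fac_neq0 //; try lia.
  over.
rewrite -mulr_sumr def_j qpoch2_shifted_sum // qfac2D.
have prod_neq0 : \prod_(i < n) (1 - q ^+ (2 * (k + i).+1)) != 0.
  by apply: contra_neq (fac_neq0 j (leqnn j)) => prod0; rewrite def_j qfac2D prod0 mulr0.
by field; rewrite fac_neq0 // prod_neq0 expf_neq0.
Qed.
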